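(* Let $\Gamma$ be a finite simple graph with a linear order on $V(\Gamma)$, and let $g_1,g_2\in G(\Gamma)$ be such that $g_1g_2$ is geodesic, i.e. $|g_1g_2|=|g_1|+|g_2|$. (i) If $g_2$ is SD-conical, then $\sigma(g_1g_2)\equiv\sigma(g_1)\sigma(g_2)$. (ii) If $g_1$ is SD-conical and strongly non-split, then $g_1g_2$ is also SD-conical and strongly non-split.
   Context: $G(\Gamma)=\langle v\in V(\Gamma)\mid [v_i,v_j]=1 \text{ if } \{v_i,v_j\}\notin E(\Gamma)\rangle$. $|g|$ is word length; a reduced word is a shortest representative; $\mathrm{supp}(g)$ is the set of generators $v$ with $v^{\pm1}$ appearing in a reduced word for $g$; $w_1\equiv w_2$ means equality of words letter by letter. $g_1,g_2$ disjointly commute if their supports are disjoint and each $v_1\in\mathrm{supp}(g_1)$ commutes with each $v_2\in\mathrm{supp}(g_2)$ (i.e. $\{v_1,v_2\}\notin E(\Gamma)$). $g$ is non-split if $\mathrm{supp}(g)$ spans a connected subgraph; strongly non-split if non-split and no generator disjointly commutes with $g$. $S(g)$ is the set of $v\in V(\Gamma)$ such that some reduced word for $g$ begins with $v$ or $v^{-1}$. $g$ is conical if $S(g)$ is a single generator $v_0$, called its apex. A conical $g$ is SD-conical if its apex $v_0$ does not commute with any generator smaller than $v_0$, i.e. $v<v_0$ implies $\{v,v_0\}\in E(\Gamma)$. CGW-normal form: a reduced word $w\equiv v_{i_1}^{\epsilon_1}\cdots v_{i_k}^{\epsilon_k}$ representing $g$ is initially normal if it is empty or $v_{i_1}$ is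 the largest element of $S(g)$; it is normal if all its suffixes are initially normal. Every $g$ has a unique normal representative word, denoted $\sigma(g)$. *)

From HB Require Import structures.
From mathcomp Require Import all_boot all_order.
From mathcomp Require Import boolp classical_sets.
From Stdlib Require Import Relations.
Set Implicit Arguments. Unset Strict Implicit. Unset Printing Implicit Defensive.
Import Order.TTheory.
Local Open Scope order_scope.

Section RAAG.
Variables (d : Order.disp_t) (T : finOrderType d) (e : rel T).
(* e is the edge relation of the simple graph Gamma; generators commute
   iff they are NOT adjacent. *)

(* A letter (v, b) stands for v if b = false and v^{-1} if b = true. *)
Definition letter := (T * bool)%type.
Definition word := seq letter.

Inductive wstep : word -> word -> Prop :=
| wstep_cancel (a b : word) (x : letter) :
    wstep (a ++ [:: x; (x.1, ~~ x.2)] ++ b) (a ++ b)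
| wstep_comm (a b : word) (x y : letter) :
    ~~ e x.1 y.1 -> wstep (a ++ [:: x; y] ++ b) (a ++ [:: y; x] ++ b).

Definition weq : word -> word -> Prop := clos_refl_sym_trans word wstep.

Definition reduced (w : word) : Prop :=
  forall w', weq w w' -> size w <= size w'.

Lemma wlen_ex (w : word) :
  exists n, `[< exists w', weq w w' /\ size w' = n >].
Proof. exists (size w); apply: asboolT; exists w; split => //; exact: rst_refl. Qed.

Definition wlen (w : word) : nat := ex_minn (wlen_ex w).

Definition supp (w : word) : {set T} :=
  [set v | `[< exists w', [/\ weq w w', reduced w' & v \in map fst w'] >]].

Definition Sfirst (w : word) : {set T} :=
  [set v | `[< exists w', [/\ weq w w', reduced w' & ohead (map fst w') = Some v] >]].

Definition dcommute (w1 w2 : word) : Prop :=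
  [disjoint supp w1 & supp w2] /\
  forall v1 v2, v1 \in supp w1 -> v2 \in supp w2 -> ~~ e v1 v2.

Definition span_connected (A : {set T}) : Prop :=
  forall u v, u \in A -> v \in A ->
    connect (fun a b => [&& a \in A, b \in A & e a b]) u v.

Definition nonsplit (w : word) : Prop := span_connected (supp w).

Definition strongly_nonsplit (w : word) : Prop :=
  nonsplit w /\ forall v : T, ~ dcommute [:: (v, false)] w.

Definition conical_with_apex (w : word) (v0 : T) : Prop := Sfirst w = [set v0].

Definition conical (w : word) : Prop := exists v0, conical_with_apex w v0.

Definition SDconical (w : word) : Prop :=
  exists v0, conical_with_apex w v0 /\ forall v, v < v0 -> e v v0.

Definition initially_normal (w : word) : Prop :=
  match w with
  | [::] => True
  | x :: _ => x.1 \in Sfirst w /\ forall v, v \in Sfirst w -> v <= x.1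
  end.

Definition normal (w : word) : Prop :=
  reduced w /\ forall n, initially_normal (drop n w).

(* sigma(g): the (unique) normal word representing the element of w. *)
Definition sigma (w : word) : word :=
  xget [::] (fun s => normal s /\ weq w s).

End RAAG.

From mathcomp Require Import all_boot all_order.
From mathcomp Require Import boolp.
From mathcomp Require classical_sets.
From Stdlib Require Import Relation_Operators.
Set Implicit Arguments. Unset Strict Implicit. Unset Printing Implicit Defensive.
Import Order.TTheory.

(* The proof rests on the piling of Crisp, Godelle and Wiest.  The pile of a word at a vertex a
   lists, in order, its letters on a, with their signs, and its letters on neighbours of a
   (those an a cannot be commuted past), as blanks.  Reading a word letter by
   letter and letting each letter cancel against the top of its own pile is invariant under the
   defining relations and cancels nothing on a reduced word, so equivalent reduced words have
   the same piles.  Hence, if uv is reduced and some reduced word for uv starts with z, then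
   either some reduced word for u starts with z, or no letter of u lies on the pile of z (z
   commutes with u and does not occur in it) and some reduced word for v starts with z.

   For (i), the only possible first letter of a suffix x u' sigma(v) of sigma(u) sigma(v) not
   already bounded by x is therefore the apex v0 of v, which differs from x and commutes with
   it; as v0 commutes with no smaller generator, v0 < x.  For (ii), strong non-splitness of u
   rules out the second alternative, so S(uv) = S(u); and supp(uv) contains supp(u), while
   every generator lies in or next to supp(u), so supp(uv) is still connected. *)

Section RightAngledArtinWords.
Variables (d : Order.disp_t) (T : finOrderType d) (e : rel T).
Hypotheses (e_sym : symmetric e) (e_irr : irreflexive e).

Local Notation word := (word T).
Local Notation letter := (letter T).
Local Notation wstep := (wstep e).
Local Notation weq := (weq e).
Local Notation reduced := (reduced e).
Local Notation wlen := (wlen e).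
Local Notation Sfirst := (Sfirst e).
Local Notation supp := (supp e).

Definition linv (x : letter) : letter := (x.1, ~~ x.2).

Lemma linvK : involutive linv.
Proof. by case=> a b; rewrite /linv /= negbK. Qed.

Lemma weq_refl w : weq w w. Proof. exact: rst_refl. Qed.

Lemma weq_sym w w' : weq w w' -> weq w' w. Proof. exact: rst_sym. Qed.

Lemma weq_trans w1 w2 w3 : weq w1 w2 -> weq w2 w3 -> weq w1 w3.
Proof. exact: rst_trans. Qed.

Lemma weq_cancel u v x : weq (u ++ x :: linv x :: v) (u ++ v).
Proof. exact/rst_step/wstep_cancel. Qed.

Lemma weq_comm u v x y : ~~ e x.1 y.1 -> weq (u ++ x :: y :: v) (u ++ y :: x :: v).
Proof. by move=> nexy; apply/rst_step/wstep_comm. Qed.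

Lemma weq_homo (f : word -> word) :
  (forall w w', wstep w w' -> wstep (f w) (f w')) ->
  forall w w', weq w w' -> weq (f w) (f w').
Proof.
move=> f_step w w'; elim=> [u u' uu'|u|u u' _|u1 u2 u3 _ IH1 _ IH2].
- exact/rst_step/f_step.
- exact: weq_refl.
- exact: weq_sym.
- exact: weq_trans IH1 IH2.
Qed.

Lemma wstep_catl c w w' : wstep w w' -> wstep (c ++ w) (c ++ w').
Proof. by case=> [a b x|a b x y nexy]; rewrite !(catA c a); constructor. Qed.

Lemma wstep_catr c w w' : wstep w w' -> wstep (w ++ c) (w' ++ c).
Proof. by case=> [a b x|a b x y nexy]; rewrite -!catA; constructor. Qed.

Lemma weq_catl c w w' : weq w w' -> weq (c ++ w) (c ++ w').
Proof. exact: (weq_homo (@wstep_catl c)). Qed.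

Lemma weq_catr c w w' : weq w w' -> weq (w ++ c) (w' ++ c).
Proof. exact: (weq_homo (f := cat^~ c) (@wstep_catr c)). Qed.

Lemma weq_cat u u' v v' : weq u u' -> weq v v' -> weq (u ++ v) (u' ++ v').
Proof. by move=> /(weq_catr v) uu' /(weq_catl u') /(weq_trans uu'). Qed.

Lemma weq_cons_inj x t1 t2 : weq (x :: t1) (x :: t2) -> weq t1 t2.
Proof.
have cancel_head t : weq (linv x :: x :: t) t.
  by have := weq_cancel [::] t (linv x); rewrite linvK.
move=> /(weq_catl [:: linv x]) W.
exact: weq_trans (weq_sym (cancel_head t1)) (weq_trans W (cancel_head t2)).
Qed.

Lemma weq_move_left (z : letter) u v : all (fun y : letter => ~~ e y.1 z.1) u ->
  weq (u ++ z :: v) (z :: u ++ v).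
Proof.
elim: u => [_|y u IH /andP [nyz /IH /(weq_catl [:: y]) W]]; first exact: weq_refl.
exact: weq_trans W (weq_comm [::] (u ++ v) nyz).
Qed.

(* [reduced] is phrased with the generic order on [nat]; this is its [leq] form. *)
Lemma reducedP r : reduced r <-> forall w', weq r w' -> size r <= size w'.
Proof. by []. Qed.

Lemma reduced_catl u v : reduced (u ++ v) -> reduced u.
Proof.
move/reducedP => uv_red; apply/reducedP => u' /(weq_catr v) /uv_red.
by rewrite !size_cat leq_add2r.
Qed.

Lemma reduced_catr u v : reduced (u ++ v) -> reduced v.
Proof.
move/reducedP => uv_red; apply/reducedP => v' /(weq_catl u) /uv_red.
by rewrite !size_cat leq_add2l.
Qed.

Lemma wlen_spec w : exists2 w', weq w w' & size w' = wlen w.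
Proof. by rewrite /wlen; case: ex_minnP => m /asboolP [w' []]; exists w'. Qed.

Lemma wlen_min w w' : weq w w' -> wlen w <= size w'.
Proof. by move=> ww'; rewrite /wlen; case: ex_minnP => m _; apply; apply/asboolP; exists w'. Qed.

Lemma size_reduced w r : reduced r -> weq w r -> size r = wlen w.
Proof.
move/reducedP => r_red wr; have [w' ww' sw'] := wlen_spec w.
apply/eqP; rewrite eqn_leq wlen_min // andbT -sw' r_red //.
exact: weq_trans (weq_sym wr) ww'.
Qed.

Lemma reduced_wlen w r : weq w r -> size r = wlen w -> reduced r.
Proof.
move=> wr sr; apply/reducedP => s rs; rewrite sr wlen_min //.
exact: weq_trans wr rs.
Qed.

Lemma reduced_weq_size r s : reduced r -> weq r s -> size s = size r -> reduced s.
Proof.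
by move=> r_red rs sr; apply: reduced_wlen rs _; rewrite sr (size_reduced r_red (weq_refl r)).
Qed.

Lemma exists_reduced w : exists2 r, weq w r & reduced r.
Proof. by have [r wr sr] := wlen_spec w; exists r => //; apply: reduced_wlen wr sr. Qed.

Lemma size_reduced_weq r s : reduced r -> reduced s -> weq r s -> size r = size s.
Proof.
by move=> r_red s_red rs; rewrite (size_reduced s_red rs) (size_reduced r_red (weq_refl r)).
Qed.

Lemma reduced_cat_geodesic w1 w2 r1 r2 : wlen (w1 ++ w2) = wlen w1 + wlen w2 ->
  weq w1 r1 -> reduced r1 -> weq w2 r2 -> reduced r2 -> reduced (r1 ++ r2).
Proof.
move=> geo w1r1 r1_red w2r2 r2_red; apply: (reduced_wlen (weq_cat w1r1 w2r2)).
by rewrite size_cat geo (size_reduced r1_red w1r1) (size_reduced r2_red w2r2).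
Qed.

Definition on_pile (a : T) (y : letter) := (y.1 == a) || e y.1 a.

Definition off_pile (a : T) : pred letter := fun y => ~~ on_pile a y.

Definition token (a : T) (y : letter) : option bool :=
  if y.1 == a then Some y.2 else None.

Definition pile (w : word) (a : T) : seq (option bool) :=
  [seq token a y | y <- w & on_pile a y].

Lemma off_pile_commute a w : all (off_pile a) w -> all (fun y : letter => ~~ e y.1 a) w.
Proof. by apply: sub_all => y; rewrite /off_pile /on_pile negb_or => /andP []. Qed.

Lemma pile_cons y w a :
  pile (y :: w) a = if on_pile a y then token a y :: pile w a else pile w a.
Proof. by rewrite /pile /=; case: ifP. Qed.

Lemma pile_cat u v a : pile (u ++ v) a = pile u a ++ pile v a.
Proof. by rewrite /pile filter_cat map_cat. Qed.

Lemma pile_rcons u x a :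
  pile (rcons u x) a = if on_pile a x then rcons (pile u a) (token a x) else pile u a.
Proof. by rewrite /pile filter_rcons; case: ifP; rewrite ?map_rcons. Qed.

Lemma pile_nil w a : (pile w a == [::]) = all (off_pile a) w.
Proof. by rewrite /pile -size_eq0 size_map size_eq0 -[LHS]negbK -has_filter -all_predC. Qed.

Lemma mem_pile w a : (a \in map fst w) = has isSome (pile w a).
Proof.
elim: w => [//|y w IH]; rewrite pile_cons /= in_cons IH /on_pile /token.
case: (eqVneq y.1 a) => [//|_] /=.
by case: (e y.1 a).
Qed.

Lemma pile_last_Some w a b : last None (pile w a) = Some b ->
  exists w1 w2, w = w1 ++ (a, b) :: w2 /\ all (off_pile a) w2.
Proof.
elim/last_ind: w => [//|w y IH]; rewrite pile_rcons.
case y_on: (on_pile a y).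
  rewrite last_rcons /token; case: eqP => // <- [<-].
  by exists w, [::]; rewrite cats1; case: y {y_on}.
case/IH => w1 [w2 [-> w2_off]]; exists w1, (rcons w2 y).
by rewrite rcons_cat all_rcons /off_pile y_on.
Qed.

Lemma pile_head_Some w a b s : pile w a = Some b :: s ->
  exists w1 w2, w = w1 ++ (a, b) :: w2 /\ all (off_pile a) w1.
Proof.
elim: w => [//|y w IH]; rewrite pile_cons.
case y_on: (on_pile a y).
  rewrite /token; case: eqP => // <- [<-] _.
  by exists [::], w; case: y {y_on}.
case/IH => w1 [w2 [-> w1_off]]; exists (y :: w1), w2.
by rewrite /= /off_pile y_on.
Qed.

(* The pile at [c] consists of blanks only. *)
Lemma pile_off_blank w a c : all (off_pile a) w -> e c a ->
  rcons (pile w c) None = None :: pile w c.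
Proof.
move=> + eca; elim: w => [//|y w IH] /= /andP [y_off /IH {}IH].
rewrite pile_cons; case: ifP => // _; rewrite /token; case: eqP => [yc|_].
  by move: y_off; rewrite /off_pile /on_pile yc eca orbT.
by rewrite rcons_cons IH.
Qed.

Lemma pile_top_blank u a b c : last None (pile u a) = Some b -> e a c ->
  exists s, pile u c = rcons s None.
Proof.
move=> /pile_last_Some [u1 [u2 [-> u2_off]]] eac.
have eca : e c a by rewrite e_sym.
have tok : token c (a, b) = None.
  by rewrite /token /=; case: eqP => // ac; move: eac; rewrite ac e_irr.
rewrite pile_cat pile_cons /on_pile /= eac orbT tok.
by rewrite -(pile_off_blank u2_off eca) -rcons_cat; eexists.
Qed.

Definition piles := T -> seq (option bool).

Definition pop (s : seq (option bool)) := take (size s).-1 s.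

(* A letter cancels iff the top of its own pile is its inverse; the blanks the cancelled letter
   left on the neighbouring piles are then on top there too (wf_top_blank) and are popped. *)
Definition pile_step (st : piles) (x : letter) : piles := fun a =>
  if on_pile a x then
    if last None (st x.1) == Some (~~ x.2) then pop (st a) else rcons (st a) (token a x)
  else st a.

Definition piling (w : word) : piles := foldl pile_step (fun=> [::]) w.

Definition cancel_free (s : seq (option bool)) :=
  forall s1 s2 b, s <> s1 ++ [:: Some b, Some (~~ b) & s2].

Definition wf_piles (st : piles) :=
  (exists u, st = pile u) /\ forall a, cancel_free (st a).

Lemma pop_rcons s z : pop (rcons s z) = s.
Proof. by rewrite /pop size_rcons -cats1 take_size_cat. Qed.

Lemma cancel_free_rcons s z : cancel_free s ->
  (forall b, last None s = Some b -> z <> Some (~~ b)) -> cancel_free (rcons s z).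
Proof.
move=> s_free z_ok s1 s2 b; case/lastP: s2 => [|s2 y].
  have -> : s1 ++ [:: Some b; Some (~~ b)] = rcons (rcons s1 (Some b)) (Some (~~ b)).
    by rewrite -!cats1 -catA.
  by move/rcons_inj => [s_eq /(z_ok b)]; apply; rewrite s_eq last_rcons.
by rewrite -rcons_cons -rcons_cons -rcons_cat => /rcons_inj [/s_free].
Qed.

Lemma cancel_free_pop s : cancel_free s -> cancel_free (pop s).
Proof.
move=> s_free s1 s2 b s_pop; apply: (s_free s1 (s2 ++ drop (size s).-1 s) b).
by rewrite -[LHS](cat_take_drop (size s).-1) -/(pop s) s_pop -catA.
Qed.

Lemma wf_top_blank st a b c : wf_piles st -> last None (st a) = Some b -> e a c ->
  exists s, st c = rcons s None.
Proof. by case=> [[u ->] _]; apply: pile_top_blank. Qed.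

Lemma pile_step_push u x : last None (pile u x.1) != Some (~~ x.2) ->
  pile_step (pile u) x = pile (rcons u x).
Proof. by move=> no_pop; apply: funext => a; rewrite /pile_step pile_rcons (negbTE no_pop). Qed.

Lemma pile_step_pop u x : last None (pile u x.1) = Some (~~ x.2) ->
  exists u1 u2, [/\ u = u1 ++ linv x :: u2, all (off_pile x.1) u2
                  & pile_step (pile u) x = pile (u1 ++ u2)].
Proof.
move=> top; have [u1 [u2 [u_eq u2_off]]] := pile_last_Some top.
exists u1, u2; split=> //; apply: funext => a.
rewrite /pile_step top eqxx u_eq !pile_cat pile_cons.
have -> : on_pile a (linv x) = on_pile a x by [].
case x_on: (on_pile a x) => //.
suff -> : token a (linv x) :: pile u2 a = rcons (pile u2 a) (token a (linv x)).
  by rewrite -rcons_cat pop_rcons.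
case: (eqVneq x.1 a) => [<-|ne]; first by move: u2_off; rewrite -pile_nil => /eqP ->.
have eax : e a x.1 by move: x_on; rewrite /on_pile (negbTE ne) e_sym.
by rewrite /token /= (negbTE ne) (pile_off_blank u2_off eax).
Qed.

Lemma wf_pile_step st x : wf_piles st -> wf_piles (pile_step st x).
Proof.
case=> [[u ->] u_free].
case top: (last None (pile u x.1) == Some (~~ x.2)).
  have [u1 [u2 [_ _ popE]]] := pile_step_pop (eqP top).
  split; first by exists (u1 ++ u2).
  move=> a; rewrite /pile_step top; case: ifP => _; last exact: u_free.
  exact/cancel_free_pop/u_free.
split; first by exists (rcons u x); apply: pile_step_push; rewrite top.
move=> a; rewrite /pile_step top; case: ifP => _; last exact: u_free.
apply: cancel_free_rcons => // b last_b; rewrite /token; case: eqP => // xa [b_eq].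
by move: top; rewrite xa last_b b_eq negbK eqxx.
Qed.

Lemma wf_piling w : wf_piles (piling w).
Proof.
elim/last_ind: w => [|w x IH]; last by rewrite /piling foldl_rcons; apply: wf_pile_step.
by split; [exists [::] | move=> a [|? ?] ? ?].
Qed.

Lemma pile_step_cancel st x : wf_piles st -> pile_step (pile_step st x) (linv x) = st.
Proof.
move=> st_wf; apply: funext => a.
rewrite {1}/pile_step /=; have -> : on_pile a (linv x) = on_pile a x by [].
case x_on: (on_pile a x); last by rewrite /pile_step x_on.
have on_self : on_pile x.1 x by rewrite /on_pile eqxx.
case top: (last None (st x.1) == Some (~~ x.2)); last first.
  by rewrite /pile_step on_self top last_rcons /token eqxx negbK eqxx x_on pop_rcons.
have [s st_x] : exists s, st x.1 = rcons s (Some (~~ x.2)).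
  by move: (eqP top); case/lastP: (st x.1) => // s z; rewrite last_rcons => <-; exists s.
have s_top : last None s != Some x.2.
  apply/eqP; case/lastP: s st_x => // s z st_x; rewrite last_rcons => z_eq.
  by case: st_wf => _ /(_ x.1 s [::] x.2); rewrite st_x z_eq -!cats1 -catA.
rewrite {1}/pile_step on_self top st_x pop_rcons negbK (negbTE s_top) /pile_step x_on top.
case: (eqVneq x.1 a) => [<-|ne]; first by rewrite st_x pop_rcons /token eqxx.
have eax : e x.1 a by move: x_on; rewrite /on_pile (negbTE ne).
have [s' ->] := wf_top_blank st_wf (eqP top) eax.
by rewrite pop_rcons /token /= (negbTE ne).
Qed.

Lemma pile_step_comm st x y : wf_piles st -> ~~ e x.1 y.1 ->
  pile_step (pile_step st x) y = pile_step (pile_step st y) x.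
Proof.
move=> st_wf nexy; case: (eqVneq x.1 y.1) => [xy1|ne].
  case: (eqVneq x.2 y.2) => [xy2|ne2].
    by have -> : x = y by case: x y xy1 xy2 {nexy} => ? ? [? ?] /= -> ->.
  have -> : y = linv x.
    by case: x y xy1 ne2 {nexy} => a b [a' b'] /= -> /negPf; case: b; case: b'.
  by rewrite pile_step_cancel //; have := pile_step_cancel (linv x) st_wf; rewrite linvK.
have y_off_x : on_pile x.1 y = false.
  by rewrite /on_pile eq_sym (negbTE ne) e_sym (negbTE nexy).
have x_off_y : on_pile y.1 x = false by rewrite /on_pile (negbTE ne) (negbTE nexy).
apply: funext => a; rewrite /pile_step y_off_x x_off_y.
case x_on: (on_pile a x); case y_on: (on_pile a y) => //.
have nxa : x.1 != a by apply: contraTneq y_on => <-; rewrite y_off_x.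
have nya : y.1 != a by apply: contraTneq x_on => <-; rewrite x_off_y.
have eax : e x.1 a by move: x_on; rewrite /on_pile (negbTE nxa).
have eay : e y.1 a by move: y_on; rewrite /on_pile (negbTE nya).
rewrite /token (negbTE nxa) (negbTE nya).
case top_x: (last None (st x.1) == Some (~~ x.2));
case top_y: (last None (st y.1) == Some (~~ y.2)) => //.
  by have [s ->] := wf_top_blank st_wf (eqP top_x) eax; rewrite !pop_rcons.
by have [s ->] := wf_top_blank st_wf (eqP top_y) eay; rewrite !pop_rcons.
Qed.

Lemma piling_wstep w w' : wstep w w' -> piling w = piling w'.
Proof.
case=> [a b x|a b x y nexy]; rewrite /piling !foldl_cat /= -/(piling a).
  by rewrite (pile_step_cancel x (wf_piling a)).
by rewrite (pile_step_comm (wf_piling a) nexy).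
Qed.

Lemma piling_weq w w' : weq w w' -> piling w = piling w'.
Proof. by elim=> // [? ? /piling_wstep|? ? ? _ -> _ ->]. Qed.

Lemma piling_reduced r : reduced r -> piling r = pile r.
Proof.
elim/last_ind: r => [//|r x IH] rx_red.
rewrite /piling foldl_rcons -/(piling r) IH; last by move: rx_red; rewrite -cats1 => /reduced_catl.
case top: (last None (pile r x.1) == Some (~~ x.2)); last by rewrite pile_step_push ?top.
have [r1 [r2 [r_eq r2_off _]]] := pile_step_pop (eqP top).
have W : weq (rcons r x) (r1 ++ r2).
  rewrite r_eq -cats1 -catA /=.
  have r2_comm := off_pile_commute r2_off.
  apply: weq_trans (weq_catl r1 (weq_sym (weq_move_left (z := linv x) [:: x] r2_comm))) _.
  by have := weq_cancel (r1 ++ r2) [::] (linv x); rewrite linvK cats0 -catA.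
move/reducedP: rx_red => /(_ _ W).
by rewrite r_eq size_rcons !size_cat /= addnS => /ltnW; rewrite ltnn.
Qed.

Lemma pile_reduced_weq r s : reduced r -> reduced s -> weq r s -> pile r = pile s.
Proof. by move=> r_red s_red /piling_weq; rewrite !piling_reduced. Qed.

Lemma SfirstP v w : reflect
  (exists w', [/\ weq w w', reduced w' & ohead (map fst w') = Some v]) (v \in Sfirst w).
Proof. by rewrite inE; apply: asboolP. Qed.

Lemma Sfirst_weq w w' : weq w w' -> Sfirst w = Sfirst w'.
Proof.
move=> ww'; apply/setP => v; apply/SfirstP/SfirstP => -[u [wu u_red hu]]; exists u.
  by split=> //; apply: weq_trans (weq_sym ww') wu.
by split=> //; apply: weq_trans ww' wu.
Qed.

Lemma Sfirst_head x t : reduced (x :: t) -> x.1 \in Sfirst (x :: t).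
Proof. by move=> xt_red; apply/SfirstP; exists (x :: t); split=> //; apply: weq_refl. Qed.

Lemma pile_head_Sfirst w a b s : reduced w -> pile w a = Some b :: s -> a \in Sfirst w.
Proof.
move=> w_red /pile_head_Some [w1 [w2 [w_eq w1_off]]].
have W : weq w ((a, b) :: w1 ++ w2).
  by rewrite w_eq; apply/weq_move_left/off_pile_commute.
have ab_red : reduced ((a, b) :: w1 ++ w2).
  by apply: reduced_weq_size w_red W _; rewrite w_eq /= !size_cat /= addnS.
by rewrite (Sfirst_weq W); apply: Sfirst_head ab_red.
Qed.

Lemma Sfirst_cat u v z : reduced (u ++ v) -> z \in Sfirst (u ++ v) ->
  z \in Sfirst u \/ all (off_pile z) u /\ z \in Sfirst v.
Proof.
move=> uv_red /SfirstP [[|[a b] r] [W r_red]] //= [<-].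
have := congr1 (fun f => f a) (pile_reduced_weq r_red uv_red (weq_sym W)).
rewrite /= pile_cons pile_cat /on_pile /token /= eqxx /=.
case u_pile: (pile u a) => [|c s] /=.
  move=> v_pile; right; split; first by rewrite -pile_nil u_pile.
  exact: pile_head_Sfirst (reduced_catr uv_red) (esym v_pile).
move=> [c_eq _]; left; rewrite -c_eq in u_pile.
exact: pile_head_Sfirst (reduced_catl uv_red) u_pile.
Qed.

Lemma normal_behead x t : normal e (x :: t) -> normal e t.
Proof.
case=> xt_red xt_norm; split=> [|n]; last exact: xt_norm n.+1.
exact: (reduced_catr (u := [:: x])).
Qed.

Lemma exists_normal_reduced r : reduced r -> exists2 s, normal e s & weq r s.
Proof.
have [n] := ubnP (size r); elim: n r => // n IH [_ _|x t].
  by exists [::]; [split=> // -[] | apply: weq_refl].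
rewrite ltnS /= => t_lt xt_red.
have [m m_S m_max] := @arg_maxP _ T T x.1 (mem (Sfirst (x :: t))) id (Sfirst_head xt_red).
have /SfirstP [[|y t'] [W yt'_red //= [ym]]] := m_S.
have t'_red : reduced t' := reduced_catr (u := [:: y]) yt'_red.
have size_t' : size t' = size t by have /= [] := size_reduced_weq xt_red yt'_red W.
have t'_lt : size t' < n by rewrite size_t'.
have [s' s'_norm t's'] := IH t' t'_lt t'_red.
have W' : weq (x :: t) (y :: s') := weq_trans W (weq_catl [:: y] t's').
have ys'_red : reduced (y :: s').
  apply: reduced_weq_size yt'_red (weq_catl [:: y] t's') _.
  by rewrite /= (size_reduced_weq t'_red s'_norm.1 t's').
exists (y :: s') => //; split=> // -[|k] /=; last exact: s'_norm.2 k.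
split=> [|v]; first exact: Sfirst_head.
by rewrite -(Sfirst_weq W') ym => /m_max.
Qed.

Lemma exists_normal w : exists2 s, normal e s & weq w s.
Proof.
have [r wr r_red] := exists_reduced w; have [s s_norm rs] := exists_normal_reduced r_red.
by exists s => //; apply: weq_trans wr rs.
Qed.

Lemma normal_uniq s1 s2 : normal e s1 -> normal e s2 -> weq s1 s2 -> s1 = s2.
Proof.
elim: s1 s2 => [|x t1 IH] [|y t2] N1 N2 W //;
  try by have := size_reduced_weq N1.1 N2.1 W.
case: (N1.2 0) (N2.2 0) => /= x_S x_max [y_S y_max].
have xy1 : x.1 = y.1.
  apply/le_anti/andP; split; [apply: y_max | apply: x_max].
    by rewrite -(Sfirst_weq W).
  by rewrite (Sfirst_weq W).
have := congr1 (fun f => f x.1) (pile_reduced_weq N1.1 N2.1 W).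
rewrite /= !pile_cons /on_pile /token -xy1 eqxx /= => -[xy2 _].
rewrite -(injective_projections _ _ xy1 xy2) in W *.
congr (_ :: _); apply: IH (normal_behead N1) (normal_behead N2) _.
exact: weq_cons_inj W.
Qed.

Lemma sigma_spec w : normal e (sigma e w) /\ weq w (sigma e w).
Proof.
rewrite /sigma; apply: (@classical_sets.xgetPex _ [::] (fun s => normal e s /\ weq w s)).
by have [s] := exists_normal w; exists s.
Qed.

Lemma sigma_eq w s : normal e s -> weq w s -> sigma e w = s.
Proof.
move=> s_norm ws; have [sigma_norm w_sigma] := sigma_spec w.
by apply: normal_uniq sigma_norm s_norm _; apply: weq_trans (weq_sym w_sigma) ws.
Qed.

Lemma suppP v w : reflect
  (exists w', [/\ weq w w', reduced w' & v \in map fst w']) (v \in supp w).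
Proof. by rewrite inE; apply: asboolP. Qed.

Lemma mem_supp_reduced v w r : v \in supp w -> reduced r -> weq w r -> v \in map fst r.
Proof.
case/suppP => w' [ww' w'_red v_w'] r_red wr.
by rewrite mem_pile -(pile_reduced_weq w'_red r_red (weq_trans (weq_sym ww') wr)) -mem_pile.
Qed.

Lemma supp_letter u z : u \in supp [:: (z, false)] -> u = z.
Proof.
case/suppP => w' [zw' w'_red]; rewrite mem_pile -(piling_reduced w'_red) -(piling_weq zw').
by rewrite /piling /= /pile_step /token /=; case: ifP => //=; case: eqP.
Qed.

Lemma supp_cat_geodesic w1 w2 : wlen (w1 ++ w2) = wlen w1 + wlen w2 ->
  supp w1 \subset supp (w1 ++ w2).
Proof.
move=> geo; have [r2 w2r2 r2_red] := exists_reduced w2.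
apply/subsetP => v /suppP [r1 [w1r1 r1_red v_r1]]; apply/suppP; exists (r1 ++ r2); split.
- exact: weq_cat.
- exact: reduced_cat_geodesic geo w1r1 r1_red w2r2 r2_red.
- by rewrite map_cat mem_cat v_r1.
Qed.

Lemma dcommute_off_pile z w r : weq w r -> reduced r -> all (off_pile z) r ->
  dcommute e [:: (z, false)] w.
Proof.
move=> wr r_red /allP r_off.
have supp_off v : v \in supp w -> (v != z) && ~~ e v z.
  move=> /mem_supp_reduced /(_ r_red wr) /mapP [y /r_off y_off ->].
  by rewrite /off_pile /on_pile negb_or in y_off.
split.
  rewrite disjoint_subset; apply/subsetP => u /supp_letter ->; rewrite inE.
  by apply/negP => /supp_off; rewrite eqxx.
by move=> v1 v2 /supp_letter -> /supp_off /andP [_]; rewrite e_sym.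
Qed.

Lemma span_connected_grow (A B : {set T}) : A \subset B -> span_connected e A ->
  (forall u, u \in B -> u \in A \/ exists2 u', u' \in A & e u u') -> span_connected e B.
Proof.
move=> AB A_conn near u v u_B v_B.
set R := fun a b => [&& a \in B, b \in B & e a b].
have R_sym : symmetric R by move=> a b; rewrite /R e_sym andbCA.
have to_A x : x \in B -> exists2 x', x' \in A & connect R x x'.
  move=> x_B; case: (near x x_B) => [x_A | [x' x'_A exx']]; [exists x | exists x'] => //.
  by apply: connect1; rewrite /R x_B (subsetP AB).
have [u' u'_A uu'] := to_A u u_B; have [v' v'_A vv'] := to_A v v_B.
rewrite (sym_connect_sym R_sym) in vv'; apply: connect_trans uu' (connect_trans _ vv').
apply: connect_sub (A_conn u' v' u'_A v'_A) => a b /and3P [a_A b_A eab].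
by apply: connect1; rewrite /R !(subsetP AB).
Qed.

Lemma strongly_nonsplit_dominating w u : strongly_nonsplit e w ->
  u \in supp w \/ exists2 u', u' \in supp w & e u u'.
Proof.
case=> _ no_dcomm; have [r wr r_red] := exists_reduced w.
have r_supp v : v \in map fst r -> v \in supp w by move=> v_r; apply/suppP; exists r.
case: (boolP (has (on_pile u) r)) => [/hasP [y y_r] | ].
  rewrite /on_pile => /orP [/eqP <- | eyu]; [left | right; exists y.1; last by rewrite e_sym];
    exact/r_supp/map_f.
by rewrite -all_predC => r_off; case: (no_dcomm u (dcommute_off_pile wr r_red r_off)).
Qed.

Lemma Sfirst_cat_strongly_nonsplit w1 w2 : wlen (w1 ++ w2) = wlen w1 + wlen w2 ->
  strongly_nonsplit e w1 -> Sfirst (w1 ++ w2) = Sfirst w1.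
Proof.
move=> geo [_ no_dcomm]; have [r2 w2r2 r2_red] := exists_reduced w2.
apply/setP => z; apply/idP/idP.
  have [r1 w1r1 r1_red] := exists_reduced w1.
  have r_red := reduced_cat_geodesic geo w1r1 r1_red w2r2 r2_red.
  rewrite (Sfirst_weq (weq_cat w1r1 w2r2)) (Sfirst_weq w1r1).
  case/(Sfirst_cat r_red) => [// | [r1_off _]].
  by case: (no_dcomm z (dcommute_off_pile w1r1 r1_red r1_off)).
case/SfirstP => -[|y r1] [w1r1 r1_red hd] //; apply/SfirstP; exists (y :: r1 ++ r2); split=> //.
  exact: weq_cat w1r1 w2r2.
exact: reduced_cat_geodesic geo w1r1 r1_red w2r2 r2_red.
Qed.

Lemma strongly_nonsplit_cat w1 w2 : wlen (w1 ++ w2) = wlen w1 + wlen w2 ->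
  strongly_nonsplit e w1 -> strongly_nonsplit e (w1 ++ w2).
Proof.
move=> geo w1_sn; have supp_sub := supp_cat_geodesic geo.
case: (w1_sn) => w1_conn w1_nodc; split.
  apply: span_connected_grow supp_sub w1_conn _ => u _.
  exact: strongly_nonsplit_dominating.
move=> v [disj comm]; apply: (w1_nodc v); split; first exact: disjointWr supp_sub disj.
by move=> v1 v2 v1_v /(subsetP supp_sub); apply: comm.
Qed.

Lemma SDconical_weq w w' : weq w w' -> SDconical e w -> SDconical e w'.
Proof. by move=> ww' [v0 [apex SD]]; exists v0; rewrite /conical_with_apex -(Sfirst_weq ww'). Qed.

Lemma initially_normal_cat_SDconical x u v : reduced (x :: u ++ v) ->
  initially_normal e (x :: u) -> SDconical e v -> initially_normal e (x :: u ++ v).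
Proof.
move=> xuv_red [_ x_max] [v0 [v_apex v0_SD]]; split=> [|z]; first exact: Sfirst_head.
case/(Sfirst_cat (u := x :: u) xuv_red) => [/x_max // | [/andP [x_off _]]].
rewrite v_apex in_set1 => /eqP z_v0; subst z.
by rewrite leNgt; apply: contra x_off => /v0_SD e_x_v0; rewrite /on_pile e_x_v0 orbT.
Qed.

Lemma normal_cat_SDconical s1 s2 : normal e s1 -> normal e s2 -> reduced (s1 ++ s2) ->
  SDconical e s2 -> normal e (s1 ++ s2).
Proof.
move=> [_ s1_norm] [_ s2_norm] s_red s2_SD; split=> // k.
rewrite drop_cat; case: ifP => _; last exact: s2_norm.
have : reduced (drop k s1 ++ s2).
  by move: s_red; rewrite -{1}(cat_take_drop k s1) -catA => /reduced_catr.
have := s1_norm k; case: (drop k s1) => [_ _ | x u xu_norm xuv_red].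
  by have := s2_norm 0; rewrite drop0.
exact: initially_normal_cat_SDconical.
Qed.

Lemma sigma_cat_SDconical w1 w2 : wlen (w1 ++ w2) = wlen w1 + wlen w2 ->
  SDconical e w2 -> sigma e (w1 ++ w2) = sigma e w1 ++ sigma e w2.
Proof.
move=> geo w2_SD; have [N1 W1] := sigma_spec w1; have [N2 W2] := sigma_spec w2.
have red12 := reduced_cat_geodesic geo W1 N1.1 W2 N2.1.
apply: sigma_eq (weq_cat W1 W2).
exact: normal_cat_SDconical N1 N2 red12 (SDconical_weq W2 w2_SD).
Qed.

End RightAngledArtinWords.

Theorem lemma2p9 (d : Order.disp_t) (T : finOrderType d) (e : rel T)
  (e_sym : symmetric e) (e_irr : irreflexive e) (w1 w2 : word T) :
  wlen e (w1 ++ w2) = wlen e w1 + wlen e w2 ->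
  (SDconical e w2 -> sigma e (w1 ++ w2) = sigma e w1 ++ sigma e w2) /\
  (SDconical e w1 -> strongly_nonsplit e w1 ->
     SDconical e (w1 ++ w2) /\ strongly_nonsplit e (w1 ++ w2)).
Proof.
move=> geo; split; first exact: sigma_cat_SDconical.
move=> [v0 [w1_apex v0_SD]] w1_sn; split; last exact: strongly_nonsplit_cat.
by exists v0; rewrite /conical_with_apex Sfirst_cat_strongly_nonsplit.
Qed.
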